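(* Let $g>0$, $\gamma>0$, and let $\hat\nu:\mathbb R\to[\nu_0,\nu_1]$ be a stretch-limiting constitutive function (independent of $s$) as in the context. For $b\in(\nu_0,\nu_1)$, let $N(0)\in\mathbb R$ be the unique number with $$b=\int_0^1\hat\nu(N(0)+g\gamma s)\,ds,$$ so that the vertical uniform string hanging from $\mathbf 0$ to $b\mathbf k$ has tension $N(s)=N(0)+g\gamma s$. Let $\epsilon\in(0,1)$. Then for all $\gamma>0$ sufficiently small (depending on $\epsilon$ and $\hat\nu$) the following holds. If $$\nu_1-(1-\epsilon)\frac{g\gamma}{2}\hat\nu_{N^-}(N_1)\le b<\nu_1,$$ then $N(0)>0$ and $\frac{N_1-N(0)}{g\gamma}\in(0,1)$ (i.e. the string is a union of an elongated extensible segment and an inextensible segment). Conversely, if $N(0)>0$ and $\frac{N_1-N(0)}{g\gamma}\in(0,1)$, then $$\nu_1-(1+\epsilon)\frac{g\gamma}{2}\hat\nu_{N^-}(N_1)\le b<\nu_1.$$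
   Context: Stretch-limited constitutive function: there are constants $N_0<0<N_1$ and $0<\nu_0<1<\nu_1$ with $\hat\nu(N)=\nu_0$ for $N\le N_0$, $\hat\nu(N)=\nu_1$ for $N\ge N_1$, $\hat\nu\in C^\infty([N_0,N_1];[\nu_0,\nu_1])$, $\hat\nu(0)=1$, and $\hat\nu'(N)\ge c>0$ on $[N_0,N_1]$. $\hat\nu_{N^-}(N_1)$ denotes the left derivative of $\hat\nu$ at $N_1$ (the derivative at $N_1$ of the restriction of $\hat\nu$ to $[N_0,N_1]$). The setting is a uniform vertical string of mass per unit reference length $\gamma$ with $\mathbf r(0)=\mathbf 0$, $\mathbf r(1)=b\mathbf k$, $\mathbf r=z\mathbf k$, stretch $z'(s)=\hat\nu(N(s))$ and tension $N(s)=N(0)+g\gamma s$; the stated integral equation is the condition $z(1)=b$, and existence/uniqueness of $N(0)$ for $b\in(\nu_0,\nu_1)$ holds because $N(0)\mapsto\int_0^1\hat\nu(N(0)+g\gamma s)ds$ is continuous and increasing on $[N_0-g\gamma,N_1]$ with values from $\nu_0$ to $\nu_1$. *)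

From Stdlib Require Import Reals.
From Coquelicot Require Import Coquelicot.
Open Scope R_scope.

Definition stretch_limited (nu : R -> R) (N0 N1 nu0 nu1 : R) : Prop :=
  N0 < 0 /\ 0 < N1 /\ 0 < nu0 /\ nu0 < 1 /\ 1 < nu1 /\
  (forall N, N <= N0 -> nu N = nu0) /\
  (forall N, N1 <= N -> nu N = nu1) /\
  (forall N, N0 <= N <= N1 -> nu0 <= nu N <= nu1) /\
  nu 0 = 1 /\
  exists F : R -> R,
    (forall (n : nat) (x : R), ex_derive_n F n x) /\
    (forall x, N0 <= x <= N1 -> F x = nu x) /\
    (exists c, 0 < c /\ forall x, N0 <= x <= N1 -> c <= Derive F x).

Definition is_left_derive (f : R -> R) (x d : R) : Prop :=
  filterlim (fun h => (f (x + h) - f x) / h) (at_left 0) (locally d).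

From Stdlib Require Import Reals Lra.
From Coquelicot Require Import Coquelicot.
Open Scope R_scope.

(* A stretch-limited nu is continuous, nondecreasing and equal to nu1 beyond
   N1, and its left derivative d at N1 is at least the positive lower bound of
   nu' on [N0, N1].  Write a = g gamma, so that the tension runs over
   [N(0), N(0) + a].  If N(0) >= N1 the string is inextensible and b = nu1.
   Otherwise monotonicity compares the profile with N1 - a (1 - s): for a
   small, nu1 - nu (N1 - t) lies between (1 -+ eps/2) d t on [0, a], hence
   b <= nu1 - (1 - eps/2) d a/2 when N(0) <= N1 - a and
   b >= nu1 - (1 + eps/2) d a/2 when N(0) >= N1 - a.  These locate N(0) in
   (N1 - a, N1) in both directions, and N1 - a > 0 for a < N1. *)

Definition clamp (a b x : R) : R := Rmax a (Rmin b x).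

Lemma clamp_in_interval (a b x : R) : a <= b -> a <= clamp a b x <= b.
Proof. intros. unfold clamp, Rmax, Rmin. repeat destruct Rle_dec; lra. Qed.

Lemma clamp_le (a b x y : R) : x <= y -> clamp a b x <= clamp a b y.
Proof. intros. unfold clamp, Rmax, Rmin. repeat destruct Rle_dec; lra. Qed.

Lemma clamp_lipschitz (a b x y : R) :
  Rabs (clamp a b y - clamp a b x) <= Rabs (y - x).
Proof.
  unfold clamp, Rmax, Rmin. repeat destruct Rle_dec;
  unfold Rabs; repeat destruct Rcase_abs; lra.
Qed.

Lemma continuous_clamp (a b x : R) : continuous (clamp a b) x.
Proof.
  apply filterlim_locally. intros eps. exists eps. intros y Hy.
  unfold ball in *; simpl in *; unfold AbsRing_ball, abs, minus, plus, opp in *; simpl in *.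
  pose proof (clamp_lipschitz a b x y) as Hlip. unfold Rminus in Hlip. lra.
Qed.

Lemma derive_lb_increment (f df : R -> R) (c a b : R) :
  a <= b ->
  (forall x, a <= x <= b -> is_derive f x (df x) /\ c <= df x) ->
  c * (b - a) <= f b - f a.
Proof.
  intros Hab Hf.
  destruct (MVT_gen f a b df) as (xi & Hxi & Hmvt);
    rewrite ?Rmin_left, ?Rmax_right in * by lra.
  - intros x Hx. apply Hf. lra.
  - intros x Hx. apply continuity_pt_filterlim, (ex_derive_continuous f).
    exists (df x). apply Hf. lra.
  - rewrite Hmvt. apply Rmult_le_compat_r; [lra | apply Hf; lra].
Qed.

Lemma is_left_derive_increment_bounds (f : R -> R) (x d eta : R) :
  is_left_derive f x d -> 0 < eta ->
  exists delta, 0 < delta /\ forall t, 0 <= t < delta ->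
    (d - eta) * t <= f x - f (x - t) <= (d + eta) * t.
Proof.
  intros Hd Heta.
  destruct (proj1 (filterlim_locally _ _) Hd (mkposreal eta Heta)) as [delta Hdelta].
  exists delta. split; [apply cond_pos |]. intros t Ht.
  destruct (Req_dec t 0) as [-> | Ht0].
  { rewrite Rminus_0_r, Rmult_0_r, Rminus_diag. lra. }
  assert (Hball : ball 0 delta (- t)).
  { unfold ball; simpl; unfold AbsRing_ball, abs, minus, plus, opp; simpl.
    rewrite Ropp_0, Rplus_0_r, Rabs_Ropp, Rabs_pos_eq; lra. }
  specialize (Hdelta (- t) Hball ltac:(lra)).
  unfold ball in Hdelta; simpl in Hdelta;
    unfold AbsRing_ball, abs, minus, plus, opp in Hdelta; simpl in Hdelta.
  apply Rabs_def2 in Hdelta.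
  replace ((f (x + - t) - f x) / - t) with ((f x - f (x - t)) / t) in Hdelta
    by (unfold Rminus; field; lra).
  set (q := (f x - f (x - t)) / t) in Hdelta.
  replace (f x - f (x - t)) with (q * t) by (unfold q; field; lra).
  split; nra.
Qed.

Lemma RInt_affine_01 (c k : R) : RInt (fun s => c - k * (1 - s)) 0 1 = c - k / 2.
Proof.
  apply is_RInt_unique.
  replace (c - k / 2) with (minus (c * 1 - k * (1 - 1 * 1 / 2)) (c * 0 - k * (0 - 0 * 0 / 2)))
    by (unfold minus, plus, opp; simpl; field).
  apply (is_RInt_derive (fun s => c * s - k * (s - s * s / 2))).
  - intros x _. auto_derive; [easy | field].
  - intros x _. apply (ex_derive_continuous (fun s => c - k * (1 - s))). auto_derive. easy.
Qed.

Lemma ex_RInt_affine_01 (c k : R) : ex_RInt (fun s => c - k * (1 - s)) 0 1.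
Proof.
  apply (ex_RInt_continuous (V := R_CompleteNormedModule)). intros s _.
  apply (ex_derive_continuous (fun s => c - k * (1 - s))). auto_derive. easy.
Qed.

Lemma RInt_comp_affine_const (nu : R -> R) (M c N a : R) :
  (forall x, M <= x -> nu x = c) -> M <= N -> 0 <= a ->
  RInt (fun s => nu (N + a * s)) 0 1 = c.
Proof.
  intros Hc HN Ha.
  rewrite (RInt_ext _ (fun _ => c)), RInt_const.
  - unfold scal; simpl; unfold mult; simpl. ring.
  - intros s Hs. rewrite Rmin_left, Rmax_right in Hs by lra. apply Hc. nra.
Qed.

Section AffineProfile.

Variable nu : R -> R.
Hypothesis nu_nondecreasing : forall x y, x <= y -> nu x <= nu y.
Hypothesis nu_continuous : forall x, continuous nu x.

Lemma ex_RInt_comp_affine (N a : R) : ex_RInt (fun s => nu (N + a * s)) 0 1.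
Proof.
  apply (ex_RInt_continuous (V := R_CompleteNormedModule)). intros s _.
  apply (continuous_comp (fun s => N + a * s) nu); [| apply nu_continuous].
  apply (ex_derive_continuous (fun s => N + a * s)). auto_derive. easy.
Qed.

Lemma RInt_comp_affine_le (M k N a : R) :
  0 <= a -> N <= M - a ->
  (forall t, 0 <= t <= a -> k * t <= nu M - nu (M - t)) ->
  RInt (fun s => nu (N + a * s)) 0 1 <= nu M - k * a / 2.
Proof.
  intros Ha HN Hk. rewrite <- RInt_affine_01.
  apply RInt_le; [lra | apply ex_RInt_comp_affine | apply ex_RInt_affine_01 |].
  intros s Hs.
  apply Rle_trans with (nu (M - a * (1 - s))).
  - apply nu_nondecreasing. nra.
  - assert (Hks := Hk (a * (1 - s)) ltac:(nra)). lra.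
Qed.

Lemma RInt_comp_affine_ge (M k N a : R) :
  0 <= a -> M - a <= N ->
  (forall t, 0 <= t <= a -> nu M - nu (M - t) <= k * t) ->
  nu M - k * a / 2 <= RInt (fun s => nu (N + a * s)) 0 1.
Proof.
  intros Ha HN Hk. rewrite <- RInt_affine_01.
  apply RInt_le; [lra | apply ex_RInt_affine_01 | apply ex_RInt_comp_affine |].
  intros s Hs.
  apply Rle_trans with (nu (M - a * (1 - s))).
  - assert (Hks := Hk (a * (1 - s)) ltac:(nra)). lra.
  - apply nu_nondecreasing. nra.
Qed.

End AffineProfile.

Section StretchLimited.

Variables (nu : R -> R) (N0 N1 nu0 nu1 : R).
Hypothesis nu_stretch_limited : stretch_limited nu N0 N1 nu0 nu1.

Lemma stretch_limited_N0_lt_N1 : N0 < N1.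
Proof. destruct nu_stretch_limited as (? & ? & _). lra. Qed.

Lemma stretch_limited_saturated (N : R) : N1 <= N -> nu N = nu1.
Proof. destruct nu_stretch_limited as (_ & _ & _ & _ & _ & _ & Hsat & _). apply Hsat. Qed.

Lemma stretch_limited_clamp (x : R) : nu x = nu (clamp N0 N1 x).
Proof.
  destruct nu_stretch_limited as (? & ? & _ & _ & _ & Hlow & Hhigh & _).
  unfold clamp, Rmax, Rmin. repeat destruct Rle_dec; try reflexivity.
  all: first [rewrite !Hhigh; lra | rewrite !Hlow; lra].
Qed.

Lemma stretch_limited_growth :
  exists c, 0 < c /\
    forall x y, N0 <= x <= y -> y <= N1 -> c * (y - x) <= nu y - nu x.
Proof.
  destruct nu_stretch_limited as (_ & _ & _ & _ & _ & _ & _ & _ & _ & F & HF & HFnu & c & Hc & HFc).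
  exists c. split; [exact Hc |]. intros x y Hxy Hy.
  rewrite <- !HFnu by lra.
  apply (derive_lb_increment F (Derive F)); [lra |]. intros z Hz. split.
  - apply Derive_correct, (HF 1%nat).
  - apply HFc. lra.
Qed.

Lemma stretch_limited_nondecreasing (x y : R) : x <= y -> nu x <= nu y.
Proof.
  intros Hxy. pose proof stretch_limited_N0_lt_N1.
  destruct stretch_limited_growth as (c & Hc & Hgrowth).
  rewrite (stretch_limited_clamp x), (stretch_limited_clamp y).
  pose proof (clamp_in_interval N0 N1 x). pose proof (clamp_in_interval N0 N1 y).
  pose proof (clamp_le N0 N1 x y Hxy).
  assert (Hinc := Hgrowth (clamp N0 N1 x) (clamp N0 N1 y) ltac:(lra) ltac:(lra)).
  nra.
Qed.

Lemma stretch_limited_continuous (x : R) : continuous nu x.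
Proof.
  pose proof stretch_limited_N0_lt_N1.
  destruct nu_stretch_limited as (_ & _ & _ & _ & _ & _ & _ & _ & _ & F & HF & HFnu & _).
  apply (continuous_ext (T := R_UniformSpace) (U := R_UniformSpace) (fun y => F (clamp N0 N1 y))).
  - intros y. rewrite (stretch_limited_clamp y), HFnu; [reflexivity |].
    apply clamp_in_interval. lra.
  - apply (continuous_comp (U := R_UniformSpace) (V := R_UniformSpace) (W := R_UniformSpace)
      (clamp N0 N1) F); [apply continuous_clamp |].
    apply (ex_derive_continuous (K := R_AbsRing) (V := R_NormedModule)), (HF 1%nat).
Qed.

Lemma stretch_limited_left_derive_pos (d : R) : is_left_derive nu N1 d -> 0 < d.
Proof.
  intros Hd. pose proof stretch_limited_N0_lt_N1.
  destruct stretch_limited_growth as (c & Hc & Hgrowth).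
  destruct (is_left_derive_increment_bounds nu N1 d (c / 2) Hd) as (delta & Hdelta & Hbounds);
    [lra |].
  set (t := Rmin delta (N1 - N0) / 2).
  assert (Ht : 0 < t /\ t < delta /\ t < N1 - N0).
  { unfold t. pose proof (Rmin_l delta (N1 - N0)). pose proof (Rmin_r delta (N1 - N0)).
    pose proof (Rmin_glb_lt delta (N1 - N0) 0). lra. }
  (* c t <= nu N1 - nu (N1 - t) <= (d + c/2) t forces d >= c/2. *)
  assert (Hup := Hbounds t ltac:(lra)).
  assert (Hlow := Hgrowth (N1 - t) N1 ltac:(lra) ltac:(lra)).
  nra.
Qed.

End StretchLimited.

Lemma ratio_in_unit_interval (M N a : R) :
  0 < a -> (0 < (M - N) / a < 1 <-> M - a < N < M).
Proof.
  intros Ha. rewrite <- Rdiv_lt_1 by exact Ha. split.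
  - intros [Hpos Hlt]. split; [lra |].
    apply Rlt_0_minus. replace (M - N) with ((M - N) / a * a) by (field; lra). nra.
  - intros [Hlo Hhi]. split; [apply Rdiv_lt_0_compat |]; lra.
Qed.

Theorem proposition3p2 (g : R) (nu : R -> R) (N0 N1 nu0 nu1 d eps : R) :
  0 < g ->
  stretch_limited nu N0 N1 nu0 nu1 ->
  is_left_derive nu N1 d ->
  0 < eps < 1 ->
  exists gamma0 : R, 0 < gamma0 /\
    forall (gamma b Nzero : R),
      0 < gamma < gamma0 ->
      nu0 < b < nu1 ->
      b = RInt (fun s => nu (Nzero + g * gamma * s)) 0 1 ->
      (nu1 - (1 - eps) * (g * gamma / 2) * d <= b < nu1 ->
         0 < Nzero /\ 0 < (N1 - Nzero) / (g * gamma) < 1) /\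
      (0 < Nzero /\ 0 < (N1 - Nzero) / (g * gamma) < 1 ->
         nu1 - (1 + eps) * (g * gamma / 2) * d <= b < nu1).
Proof.
  intros Hg Hnu Hd Heps.
  pose proof (stretch_limited_left_derive_pos _ _ _ _ _ Hnu d Hd) as Hdpos.
  pose proof (stretch_limited_nondecreasing _ _ _ _ _ Hnu) as Hmono.
  pose proof (stretch_limited_continuous _ _ _ _ _ Hnu) as Hcont.
  pose proof (stretch_limited_saturated _ _ _ _ _ Hnu) as Hsat.
  assert (HN1 : 0 < N1) by (destruct Hnu as (_ & ? & _); lra).
  destruct (is_left_derive_increment_bounds nu N1 d (eps * d / 2) Hd)
    as (delta & Hdelta & Hbounds); [nra |].
  exists (Rmin delta N1 / g). split; [apply Rdiv_lt_0_compat; [apply Rmin_glb_lt |]; lra |].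
  intros gamma b Nzero [Hgamma Hgamma0] Hb Hint.
  apply Rlt_div_r in Hgamma0; [| lra].
  pose proof (Rmin_l delta N1). pose proof (Rmin_r delta N1).
  set (a := g * gamma) in *.
  assert (Ha : 0 < a < delta /\ a < N1) by (unfold a; nra).
  rewrite ratio_in_unit_interval by lra.
  assert (Hsaturated : N1 <= Nzero -> b = nu1).
  { intros HN. rewrite Hint. apply (RInt_comp_affine_const nu N1); [exact Hsat | lra | lra]. }
  assert (Hupper : Nzero <= N1 - a -> b <= nu N1 - (d - eps * d / 2) * a / 2).
  { intros HN. rewrite Hint. apply RInt_comp_affine_le; [exact Hmono | exact Hcont | lra | lra |].
    intros t Ht. pose proof (Hbounds t ltac:(lra)). lra. }
  assert (Hlower : N1 - a <= Nzero -> nu N1 - (d + eps * d / 2) * a / 2 <= b).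
  { intros HN. rewrite Hint. apply RInt_comp_affine_ge; [exact Hmono | exact Hcont | lra | lra |].
    intros t Ht. pose proof (Hbounds t ltac:(lra)). lra. }
  rewrite Hsat in Hupper, Hlower by lra.
  assert (0 < eps * d * a) by (repeat apply Rmult_lt_0_compat; lra).
  split.
  - intros [Hb_low _].
    destruct (Rle_lt_dec N1 Nzero) as [HN | HN]; [specialize (Hsaturated HN); lra |].
    destruct (Rle_lt_dec Nzero (N1 - a)) as [HN' | HN']; [specialize (Hupper HN'); lra |].
    lra.
  - intros [_ HN]. specialize (Hlower ltac:(lra)). lra.
Qed.
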